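(* Let $\mathbb{K}$ be an algebraically closed field of characteristic zero, let $D$ be a derivation of $\mathbb{K}[x,y]$ and let $\rho\in\mathrm{Aut}(D)$. Suppose $\rho(\mathfrak{m})=\mathfrak{m}$ for a maximal ideal $\mathfrak{m}$ of $\mathbb{K}[x,y]$ which is not stable under $D$ (i.e. $D(\mathfrak{m})\not\subseteq\mathfrak{m}$). Then there exists a principal ideal $\mathfrak{a}\subseteq\mathfrak{m}$ (possibly $\mathfrak{a}=(0)$) such that: (a) $D(\mathfrak{a})\subseteq\mathfrak{a}$ and $\rho(\mathfrak{a})=\mathfrak{a}$; (b) $\rho$ induces the identity map on $\mathbb{K}[x,y]/\mathfrak{a}$, i.e. $\rho(g)-g\in\mathfrak{a}$ for all $g\in\mathbb{K}[x,y]$.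
   Context: A derivation of $\mathbb{K}[x,y]$ is a $\mathbb{K}$-linear map $D$ with $D(fg)=gD(f)+fD(g)$. $\mathrm{Aut}(D)$ denotes the group of $\mathbb{K}$-algebra automorphisms $\rho$ of $\mathbb{K}[x,y]$ with $\rho D=D\rho$. *)

From HB Require Import structures.
From mathcomp Require Import all_boot all_order all_algebra.
From mathcomp Require Export mpoly.
Set Implicit Arguments. Unset Strict Implicit. Unset Printing Implicit Defensive.
Import GRing.Theory.
Local Open Scope ring_scope.

Definition is_ideal (R : comRingType) (I : R -> Prop) : Prop :=
  [/\ I 0, (forall a b, I a -> I b -> I (a + b)) & (forall r a, I a -> I (r * a))].

Definition is_maximal_ideal (R : comRingType) (I : R -> Prop) : Prop :=
  [/\ is_ideal I, ~ I 1 &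
      forall J : R -> Prop, is_ideal J -> (forall a, I a -> J a) ->
        (forall a, J a <-> I a) \/ (forall a, J a)].

Definition principal_ideal (R : comRingType) (f : R) : R -> Prop :=
  fun g => exists h, g = h * f.

Definition image_set (R : Type) (phi : R -> R) (I : R -> Prop) : R -> Prop :=
  fun h => exists g, I g /\ phi g = h.

Definition is_derivation (K : comRingType) (A : comAlgType K)
  (D : {linear A -> A}) : Prop :=
  forall f g : A, D (f * g) = g * D f + f * D g.

From HB Require Import structures.
From mathcomp Require Import all_boot all_order all_algebra.
From mathcomp Require Import mpoly.
From mathcomp Require Import ring zify.
From Stdlib Require Import Classical.
Set Implicit Arguments. Unset Strict Implicit. Unset Printing Implicit Defensive.
Import GRing.Theory.
Local Open Scope ring_scope.

(** The maximal ideal [m] is the kernel of the evaluation [E] at a point [p] of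
  the plane, and [D m] not contained in [m] means [E (D x_i) <> 0] for one of the
  variables [x_i].  Let [a] be the ideal of the [g] all of whose iterated
  derivatives [D^k g] vanish at [p].  It lies in [m] and is [D]-stable; since
  [rho] commutes with [D] and fixes [p], it is [rho]-stable and contains every
  [rho g - g].  The Leibniz formula and characteristic zero make [a] prime, and
  [E (D x_i) <> 0] prevents [a] from containing a nonzero polynomial in [x_i]
  alone.  A prime ideal of [K[x_i][x_j]] with this property is principal,
  generated by an element of least degree in [x_j] whose leading coefficient has
  least degree: pseudo-division by it leaves no remainder. *)

Lemma classical_ex_minn (P : nat -> Prop) :
  (exists n, P n) -> exists2 n, P n & forall k, P k -> (n <= k)%N.
Proof.
case=> n Pn; apply: NNPP => nomin; elim/ltn_ind: n Pn => n IHn Pn.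
apply: nomin; exists n => // k Pk; rewrite leqNgt; apply/negP => ltkn.
exact: IHn k ltkn Pk.
Qed.

Section Ideals.
Variable R : comNzRingType.

Definition is_prime_ideal (I : R -> Prop) :=
  [/\ is_ideal I, ~ I 1 & forall a b, I (a * b) -> I a \/ I b].

Section IdealTheory.
Variables (I : R -> Prop) (idI : is_ideal I).

Lemma ideal0 : I 0. Proof. by case: idI. Qed.

Lemma idealD a b : I a -> I b -> I (a + b). Proof. by case: idI => _ + _; apply. Qed.

Lemma idealMl r a : I a -> I (r * a). Proof. by case: idI => _ _; apply. Qed.

Lemma idealMr r a : I a -> I (a * r). Proof. by rewrite mulrC; apply: idealMl. Qed.

Lemma idealN a : I a -> I (- a). Proof. by rewrite -mulN1r; apply: idealMl. Qed.

Lemma idealB a b : I a -> I b -> I (a - b).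
Proof. by move=> Ia /idealN; apply: idealD. Qed.

Lemma ideal_unit a b : I a -> b * a = 1 -> I 1.
Proof. by move=> Ia <-; apply: idealMl. Qed.

End IdealTheory.

Lemma maximal_ideal_prime m : is_maximal_ideal m -> is_prime_ideal m.
Proof.
case=> idm m1 mmax; split=> // a b mab; case: (classic (m a)) => [|ma]; [by left | right].
pose J z := exists r s, m r /\ z = r + s * a.
have idJ : is_ideal J.
  split; first by exists 0, 0; rewrite mul0r addr0; split=> //; apply: ideal0.
    move=> _ _ [r1 [s1 [mr1 ->]]] [r2 [s2 [mr2 ->]]]; exists (r1 + r2), (s1 + s2).
    by rewrite mulrDl addrACA; split=> //; apply: idealD.
  move=> t _ [r [s [mr ->]]]; exists (t * r), (t * s).
  by rewrite mulrDr mulrA; split=> //; apply: idealMl.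
have mJ z : m z -> J z by move=> mz; exists z, 0; rewrite mul0r addr0.
have [Jm|J1] := mmax J idJ mJ.
  by case: ma; apply/Jm; exists 0, 1; rewrite add0r mul1r; split=> //; apply: ideal0.
have [r [s [mr e1]]] := J1 1.
have -> : b = r * b + s * (a * b) by rewrite mulrA -mulrDl -e1 mul1r.
by apply: (idealD idm); [apply: (idealMr idm) | apply: (idealMl idm)].
Qed.

Lemma prime_ideal_prod I (s : seq R) :
  is_prime_ideal I -> I (\prod_(z <- s) z) -> exists2 z, z \in s & I z.
Proof.
case=> _ I1 Iprime; elim: s => [|z s IHs]; first by rewrite big_nil.
rewrite big_cons => /Iprime [Iz|/IHs [w ws Iw]]; first by exists z; rewrite ?mem_head.
by exists w; rewrite // in_cons ws orbT.
Qed.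

Lemma maximal_ideal_kerE (F : nzRingType) (E : {rmorphism R -> F}) m :
  is_maximal_ideal m -> (forall g, m g -> E g = 0) -> forall g, m g <-> E g = 0.
Proof.
case=> _ _ mmax mE.
have idE : is_ideal (fun g => E g = 0).
  by split=> [|a b Ea Eb|r a Ea]; rewrite ?rmorph0 ?rmorphD ?rmorphM ?Ea ?Eb ?addr0 ?mulr0.
have [Em|E1] := mmax _ idE mE; first by move=> g; rewrite Em.
by have /eqP := E1 1; rewrite rmorph1 oner_eq0.
Qed.

End Ideals.

Section IdealPreimage.
Variables (R S : comNzRingType) (f : {rmorphism R -> S}).

Lemma is_ideal_preim I : is_ideal I -> is_ideal (I \o f).
Proof.
case=> I0 ID IM; split=> [|a b|r a] /=; rewrite ?rmorph0 ?rmorphD ?rmorphM //.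
exact: ID.
exact: IM.
Qed.

Lemma is_prime_ideal_preim I : is_prime_ideal I -> is_prime_ideal (I \o f).
Proof.
case=> idI I1 Iprime; split=> [|/=|a b /=]; rewrite ?rmorph1 ?rmorphM //.
  exact: is_ideal_preim.
exact: Iprime.
Qed.

End IdealPreimage.

Section IdealTransport.
Variables (R S : comNzRingType) (f : {rmorphism R -> S}) (g : {rmorphism S -> R}).
Hypotheses (fK : cancel f g) (gK : cancel g f).

Lemma is_maximal_ideal_preim m : is_maximal_ideal m -> is_maximal_ideal (m \o f).
Proof.
case=> idm m1 mmax; split=> [|/=|J idJ mJ]; rewrite ?rmorph1 //.
  exact: is_ideal_preim.
have mJg y : m y -> J (g y) by move=> my; apply: mJ; rewrite /= gK.
have [Jm|J1] := mmax _ (is_ideal_preim g idJ) mJg; [left | right] => x.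
  by rewrite /= -Jm /= fK.
by rewrite -[x]fK; apply: J1.
Qed.

Lemma principal_ideal_preim I p :
  (forall y, I (g y) <-> principal_ideal p y) -> forall x, I x <-> principal_ideal (g p) x.
Proof.
move=> Ip x; rewrite -{1}[x]fK Ip; split=> [[h ex]|[h ->]].
  by exists (g h); rewrite -[x]fK ex rmorphM.
by exists (f h); rewrite rmorphM gK.
Qed.
End IdealTransport.

Section Derivn.
Variables (R : comNzRingType) (D : {additive R -> R}).
Hypothesis D_leibniz : forall f g, D (f * g) = g * D f + f * D g.

Definition derivn k := iter k D.

Lemma derivn_is_zmod_morphism k : zmod_morphism (derivn k).
Proof. by elim: k => [|k IHk] f g //=; rewrite IHk raddfB. Qed.
HB.instance Definition _ k :=
  GRing.isZmodMorphism.Build R R (derivn k) (derivn_is_zmod_morphism k).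

Lemma derivnS k f : derivn k.+1 f = D (derivn k f).
Proof. by []. Qed.

Lemma derivnSr k f : derivn k.+1 f = derivn k (D f).
Proof. exact: iterSr. Qed.

Lemma derivnM n f g :
  derivn n (f * g) = \sum_(i < n.+1) (derivn i f * derivn (n - i) g) *+ 'C(n, i).
Proof.
elim: n => [|n IHn]; first by rewrite big_ord1 mulr1n.
rewrite derivnS IHn raddf_sum /=.
under eq_bigr => i _ do
  rewrite raddfMn /= D_leibniz mulrnDl [_ * D _]mulrC -!derivnS -(@subSn i n (ltn_ord i)).
rewrite big_split /= [RHS]big_ord_recl /= bin0.
under [X in _ = _ + X]eq_bigr => i _ do rewrite add0n subSS binS mulrnDr addrC.
rewrite big_split /= [RHS]addrCA; congr (_ + _).
rewrite big_ord_recl [X in _ = _ + X]big_ord_recr /= bin0 bin_small // addr0.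
by congr (_ + _); apply: eq_bigr => i _; rewrite /bump /= add1n add0n subSS.
Qed.

Lemma deriv1 : D 1 = 0.
Proof.
have e := D_leibniz 1 1; rewrite mulr1 mul1r in e.
by apply: (@addrI _ (D 1)); rewrite addr0 -e.
Qed.

Lemma deriv_exprS t n : D (t ^+ n.+1) = t ^+ n * D t *+ n.+1.
Proof.
elim: n => [|n IHn]; first by rewrite expr1 expr0 mul1r.
by rewrite exprS D_leibniz IHn mulrnAr mulrA -exprS [RHS]mulrS.
Qed.

End Derivn.

Section VanishingIdeal.
Variables (R : comNzRingType) (F : idomainType).
Hypothesis F_char0 : [pchar F] =i pred0.
Variable D : {additive R -> R}.
Hypothesis D_leibniz : forall f g, D (f * g) = g * D f + f * D g.
Variable E : {rmorphism R -> F}.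

Definition vanishing_ideal g := forall k, E (derivn D k g) = 0.
Local Notation V := vanishing_ideal.

Lemma vanishing_ideal_kerE g : V g -> E g = 0.
Proof. by move/(_ 0%N). Qed.

Lemma vanishing_ideal_deriv g : V g -> V (D g).
Proof. by move=> Vg k; rewrite -derivnSr. Qed.

Lemma vanishing_ideal_is_ideal : is_ideal V.
Proof.
split=> [k|a b Va Vb k|r a Va k]; first by rewrite raddf0 rmorph0.
  by rewrite raddfD rmorphD /= Va Vb addr0.
rewrite (derivnM D_leibniz) rmorph_sum big1 // => i _.
by rewrite rmorphMn rmorphM Va mulr0 mul0rn.
Qed.

Lemma vanishing_ideal_order a :
  ~ V a -> exists i, E (derivn D i a) != 0 /\ forall l, (l < i)%N -> E (derivn D l a) = 0.
Proof.
move=> /not_all_ex_not nVa; have exa : exists i, E (derivn D i a) != 0.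
  by case: nVa => i /eqP; exists i.
case: (ex_minnP exa) => i Eai imin; exists i; split=> // l lti.
by apply: contraTeq lti => /imin; rewrite leqNgt.
Qed.

Lemma vanishing_ideal_prime : is_prime_ideal V.
Proof.
have idV := vanishing_ideal_is_ideal.
split=> // [|a b Vab]; first by move/(_ 0%N)/eqP; rewrite rmorph1 oner_eq0.
apply: NNPP => /not_or_and [/vanishing_ideal_order [i [Eai Ea]]].
move=> /vanishing_ideal_order [j [Ebj Eb]].
(* At order [i + j] only the index [i] term of the Leibniz sum survives. *)
have := Vab (i + j)%N; apply/eqP.
rewrite (derivnM D_leibniz) rmorph_sum.
rewrite (bigD1 (Ordinal (leq_addr j i : (i < (i + j).+1)%N))) //= big1 ?addr0.
  rewrite rmorphMn rmorphM addKn -mulr_natr !mulf_neq0 //.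
  by rewrite (pcharf0P F).1 // -lt0n bin_gt0 leq_addr.
move=> l neq_li; rewrite rmorphMn rmorphM.
case: (ltngtP l i) => [ltli|ltil|eqli]; first by rewrite Ea ?mul0r ?mul0rn.
  by rewrite Eb ?mulr0 ?mul0rn //; have := ltn_ord l; lia.
by case/eqP: neq_li; apply: val_inj.
Qed.

Lemma vanishing_ideal_power e t N :
  E t = 0 -> E (D t) != 0 -> E e != 0 -> ~ V (e * t ^+ N).
Proof.
move=> Et EDt; elim: N e => [|N IHN] e Ee Vet.
  by rewrite expr0 mulr1 in Vet; rewrite (vanishing_ideal_kerE Vet) eqxx in Ee.
apply: (IHN (e * e * D t *+ N.+1)).
  by rewrite rmorphMn -mulr_natr !rmorphM !mulf_neq0 // (pcharf0P F).1.
have -> : e * e * D t *+ N.+1 * t ^+ N = e * D (e * t ^+ N.+1) - D e * (e * t ^+ N.+1).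
  by rewrite D_leibniz deriv_exprS //; ring.
have idV := vanishing_ideal_is_ideal.
by apply: (idealB idV); apply: (idealMl idV) => //; apply: vanishing_ideal_deriv.
Qed.

Section Automorphism.
Variable rho : {rmorphism R -> R}.
Hypotheses (rhoD : forall f, rho (D f) = D (rho f)) (Erho : forall f, E (rho f) = E f).

Lemma derivn_rho k g : derivn D k (rho g) = rho (derivn D k g).
Proof. by elim: k => //= k ->; rewrite rhoD. Qed.

Lemma vanishing_ideal_rho g : V (rho g) <-> V g.
Proof. by split=> Vg k; [rewrite -Erho -derivn_rho | rewrite derivn_rho Erho]. Qed.

Lemma vanishing_ideal_subr g : V (rho g - g).
Proof. by move=> k; rewrite raddfB rmorphB /= derivn_rho Erho subrr. Qed.

End Automorphism.

End VanishingIdeal.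

Lemma ideal_pdiv_min (R : comNzRingType) (I : {poly R} -> Prop) p h :
  is_ideal I -> I p -> p != 0 -> (forall r, I r -> r != 0 -> (size p <= size r)%N) ->
  I h -> exists k q, (lead_coef p ^+ k)%:P * h = q * p.
Proof.
move=> idI Ip p0 pmin Ih; exists (Pdiv.Ring.rscalp h p), (Pdiv.Ring.rdivp h p).
have e := Pdiv.ComRing.rdivp_eq p h.
suff r0 : Pdiv.Ring.rmodp h p = 0 by rewrite mul_polyC e r0 addr0.
apply: contraTeq (Pdiv.Ring.ltn_rmodpN0 h p0) => r0; rewrite -leqNgt; apply: pmin r0.
rewrite -[Pdiv.Ring.rmodp _ _](addKr (Pdiv.Ring.rdivp h p * p)) -e -mul_polyC.
by apply: (idealD idI); [apply: (idealN idI); apply: (idealMl idI) | apply: (idealMl idI)].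
Qed.

Section BivariatePolynomials.
Variable K : closedFieldType.
Local Notation S := {poly {poly K}}.

Lemma prime_ideal_linear_factor (R : comNzRingType) (F : {rmorphism {poly K} -> R}) I a :
  is_prime_ideal I -> a != 0 -> I (F a) -> exists z, I (F ('X - z%:P)).
Proof.
move=> Iprime a0; have [idI I1 Ip] := Iprime; have [rs ->] := closed_field_poly_normal a.
rewrite -mul_polyC rmorphM => /Ip [Ia|].
  case: I1; apply: (ideal_unit idI Ia (b := F (lead_coef a)^-1%:P)).
  by rewrite -rmorphM -polyCM mulVf ?rmorph1 // lead_coef_eq0.
rewrite rmorph_prod -(big_map (fun z => F ('X - z%:P)) xpredT id).
by case/(prime_ideal_prod Iprime) => _ /mapP [z _ ->]; exists z.
Qed.

Lemma exists_nonroot (L : {poly K}) : L != 0 -> exists c, ~~ root L c.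
Proof.
(* A root of [L - 1] is not a root of [L]. *)
move=> L0; case: (boolP (size (L - 1) == 1%N)) => [sL1|/closed_rootP [c]].
  have /size1_polyC eL : (size L <= 1)%N.
    by rewrite -[L](subrK 1) (leq_trans (size_polyD _ _)) // geq_max (eqP sL1) size_poly1.
  by exists 0; apply: contra L0; rewrite eL /root hornerC polyC_eq0.
by rewrite /root hornerD hornerN hornerC subr_eq0 => /eqP Lc; exists c; rewrite /root Lc oner_eq0.
Qed.

Definition evalx (c : K) : S -> {poly K} := map_poly (horner_eval c).
HB.instance Definition _ c := GRing.RMorphism.on (evalx c).

Definition eval2 (x0 y0 : K) : S -> K := horner_eval y0 \o evalx x0.
HB.instance Definition _ x0 y0 := GRing.RMorphism.on (eval2 x0 y0).

Lemma evalxC c a : evalx c a%:P = a.[c]%:P.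
Proof. exact: map_polyC. Qed.

Lemma evalx_XsubC c : evalx c ('X - c%:P)%:P = 0.
Proof. by rewrite evalxC hornerXsubC subrr. Qed.

Lemma eval2C x0 y0 a : eval2 x0 y0 a%:P = a.[x0].
Proof. by rewrite /eval2 /= evalxC /horner_eval hornerC. Qed.

Lemma eval2X x0 y0 : eval2 x0 y0 'X = y0.
Proof. by rewrite /eval2 /= /evalx map_polyX /horner_eval hornerX. Qed.

Lemma evalx_eq0 c g : evalx c g = 0 -> exists A, g = ('X - c%:P)%:P * A.
Proof.
move=> gc0; exists (map_poly (fun a => a %/ ('X - c%:P)) g).
apply/polyP => i; rewrite coefCM coef_map_id0 ?div0p // mulrC divpK //.
have := congr1 (fun p : {poly K} => p`_i) gc0; rewrite coef0 coef_map /= /horner_eval => gic.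
by rewrite dvdp_XsubCl /root gic.
Qed.

Lemma evalx_decomp c g : exists A, g = ('X - c%:P)%:P * A + map_poly polyC (evalx c g).
Proof.
have [A eA] : exists A, g - map_poly polyC (evalx c g) = ('X - c%:P)%:P * A.
  apply: evalx_eq0; apply/eqP; rewrite rmorphB subr_eq0; apply/eqP/polyP => i.
  by rewrite /evalx !coef_map /= /horner_eval hornerC.
by exists A; rewrite -eA subrK.
Qed.

Lemma eval2_decomp x0 y0 g : exists A B,
  g = ('X - x0%:P)%:P * A + ('X - y0%:P%:P) * B + (eval2 x0 y0 g)%:P%:P.
Proof.
have [A eA] := evalx_decomp x0 g; set b := evalx x0 g in eA.
have /factor_theorem [q eq] : root (b - b.[y0]%:P) y0 by rewrite /root !hornerE subrr.
exists A, q^:P; rewrite -addrA {1}eA; congr (_ + _).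
rewrite -[b in b^:P](subrK b.[y0]%:P) eq rmorphD rmorphM /= map_polyXsubC map_polyC.
by rewrite mulrC.
Qed.

Lemma ideal_polyCC_eq0 (I : S -> Prop) c : is_ideal I -> ~ I 1 -> I c%:P%:P -> c = 0.
Proof.
move=> idI I1 Ic; apply: NNPP => /eqP c0; case: I1.
by apply: (ideal_unit idI Ic (b := c^-1%:P%:P)); rewrite -!polyCM mulVf.
Qed.

Lemma cancel_linear_factor (pi h q : S) c :
  evalx c pi != 0 -> ('X - c%:P)%:P * h = q * pi -> exists q', h = q' * pi.
Proof.
move=> pic e; have /eqP : evalx c q * evalx c pi = 0.
  by rewrite -rmorphM -e rmorphM /= evalx_XsubC mul0r.
rewrite mulf_eq0 (negbTE pic) orbF => /eqP /evalx_eq0 [q' eq'].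
exists q'; apply: (mulfI (_ : ('X - c%:P)%:P != 0)); first by rewrite polyC_eq0 polyXsubC_eq0.
by rewrite e eq' mulrA.
Qed.

Lemma cancel_poly_factor (pi h q : S) (A : {poly K}) :
  (forall c, evalx c pi != 0) -> A != 0 -> A%:P * h = q * pi -> exists q', h = q' * pi.
Proof.
move=> pic; have [rs ->] := closed_field_poly_normal A; move: (lead_coef A) => a.
rewrite scaler_eq0 negb_or => /andP [a0 _]; elim: rs h q => [|z rs IHrs] h q.
  rewrite big_nil alg_polyC => e; exists (a^-1%:P%:P * q).
  by rewrite -mulrA -e mulrA -!polyCM mulVf // mul1r.
rewrite big_cons scalerAr rmorphM /= -mulrA => /(cancel_linear_factor (pic z)) [q' e'].
exact: IHrs e'.
Qed.

Lemma prime_ideal_principal (Q : S -> Prop) :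
  is_prime_ideal Q -> (forall a, Q a%:P -> a = 0) ->
  exists pi, forall g, Q g <-> principal_ideal pi g.
Proof.
move=> Qprime QK0; have [idQ Q1 Qp] := Qprime.
case: (classic (exists g, Q g /\ g != 0)) => [exQ|Q0]; last first.
  exists 0 => g; split=> [Qg|[h ->]]; last by rewrite mulr0; apply: ideal0.
  by exists 0; rewrite mulr0; apply: NNPP => /eqP g0; apply: Q0; exists g.
pose szQ n := exists g, [/\ Q g, g != 0 & size g = n].
have [n [g1 [Qg1 g10 sg1]] nmin] : exists2 n, szQ n & forall k, szQ k -> (n <= k)%N.
  by apply: classical_ex_minn; case: exQ => g [Qg g0]; exists (size g), g.
(* Minimizing also the leading coefficient rules out factors [x - c] of [pi]. *)
pose lcQ d := exists g, [/\ Q g, g != 0, size g = n & size (lead_coef g) = d].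
have [d [pi [Qpi pi0 spi lpi]] dmin] : exists2 d, lcQ d & forall k, lcQ k -> (d <= k)%N.
  by apply: classical_ex_minn; exists (size (lead_coef g1)), g1.
have pi_min r : Q r -> r != 0 -> (size pi <= size r)%N.
  by rewrite spi => Qr r0; apply: nmin; exists r.
have pi_noroot c : evalx c pi != 0.
  apply/negP => /eqP /evalx_eq0 [pi' epi]; have Xc0 : 'X - c%:P != 0 by rewrite polyXsubC_eq0.
  have [/QK0 /eqP|Qpi'] : Q ('X - c%:P)%:P \/ Q pi' by apply: Qp; rewrite -epi.
    by rewrite (negbTE Xc0).
  have pi'0 : pi' != 0 by apply: contraNneq pi0 => pi'0; rewrite epi pi'0 mulr0.
  have /dmin : lcQ (size (lead_coef pi')) by exists pi'; rewrite -spi epi size_Cmul.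
  rewrite leqNgt -lpi epi lead_coefM lead_coefC size_mul ?lead_coef_eq0 //.
  by rewrite size_XsubC ltnSn.
exists pi => g; split=> [Qg|[h ->]]; last exact: idealMl.
have [k [q e]] := ideal_pdiv_min idQ Qpi pi0 pi_min Qg.
by apply: cancel_poly_factor pi_noroot _ e; rewrite expf_neq0 // lead_coef_eq0.
Qed.

Lemma prime_ideal_eval2_XsubC m x0 :
  is_prime_ideal m -> m ('X - x0%:P)%:P -> exists y0, forall g, m g -> eval2 x0 y0 g = 0.
Proof.
move=> mprime mx0; have [idm m1 _] := mprime.
case: (classic (exists b, b != 0 /\ m b^:P)) => [[b [b0 mb]]|mKy0].
  have [y0] := prime_ideal_linear_factor (F := map_poly polyC) mprime b0 mb.
  rewrite /= map_polyXsubC => my0; exists y0 => g mg.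
  have [A [B eg]] := eval2_decomp x0 y0 g; apply: (ideal_polyCC_eq0 idm m1).
  have -> : (eval2 x0 y0 g)%:P%:P = g - (('X - x0%:P)%:P * A + ('X - y0%:P%:P) * B).
    by rewrite [X in X - _]eg addrAC subrr add0r.
  by apply: (idealB idm mg); apply: (idealD idm); apply: (idealMr idm).
exists 0 => g mg; have [A eA] := evalx_decomp x0 g.
suff gx0 : evalx x0 g = 0 by rewrite /eval2 /= gx0 /horner_eval horner0.
apply: NNPP => /eqP gx0; apply: mKy0; exists (evalx x0 g); split=> //.
have -> : (evalx x0 g)^:P = g - ('X - x0%:P)%:P * A by rewrite [X in X - _]eA addrAC subrr add0r.
by apply: (idealB idm mg); apply: (idealMr idm).
Qed.

Lemma prime_ideal_eval2_principal m (p : S) :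
  (forall g, m g <-> principal_ideal p g) -> (forall a, m a%:P -> a = 0) ->
  exists x0 y0, forall g, m g -> eval2 x0 y0 g = 0.
Proof.
move=> mp mK0; have [p0|p0] := eqVneq p 0.
  by exists 0, 0 => g /mp [h ->]; rewrite p0 mulr0 rmorph0.
have sp : (1 < size p)%N.
  rewrite ltnNge; apply/negP => /size1_polyC ep; case/negP: p0.
  by rewrite ep (mK0 p`_0) ?polyC0 // -ep; apply/mp; exists 1; rewrite mul1r.
have [c Lc] : exists c, ~~ root (lead_coef p) c by apply: exists_nonroot; rewrite lead_coef_eq0.
have [y0 ry0] : exists y0, root (evalx c p) y0.
  by apply/closed_rootP; rewrite /evalx size_map_poly_id0 ?gtn_eqF.
exists c, y0 => g /mp [h ->]; have py0 : eval2 c y0 p = 0 := rootP ry0.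
by rewrite rmorphM /= py0 mulr0.
Qed.

Lemma prime_ideal_eval2 m :
  is_prime_ideal m -> exists x0 y0, forall g, m g -> eval2 x0 y0 g = 0.
Proof.
move=> mprime; case: (classic (exists a, a != 0 /\ m a%:P)) => [[a [a0 ma]]|mK0].
  have [x0 /(prime_ideal_eval2_XsubC mprime) [y0 mE]] :=
    prime_ideal_linear_factor (F := polyC) mprime a0 ma.
  by exists x0, y0.
have mK0' a : m a%:P -> a = 0 by move=> ma; apply: NNPP => /eqP a0; apply: mK0; exists a.
have [p mp] := prime_ideal_principal mprime mK0'.
exact: prime_ideal_eval2_principal mp mK0'.
Qed.

Lemma maximal_ideal_eval2 m :
  is_maximal_ideal m -> exists x0 y0, forall g, m g <-> eval2 x0 y0 g = 0.
Proof.
move=> mmax; have [x0 [y0 mE]] := prime_ideal_eval2 (maximal_ideal_prime mmax).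
by exists x0, y0; apply: maximal_ideal_kerE.
Qed.

End BivariatePolynomials.

Section BivariateMpoly.
Variable K : closedFieldType.
Local Notation S := {poly {poly K}}.
Local Notation M := {mpoly K[2]}.

Section Isomorphism.
Variables i j : 'I_2.
Hypothesis ij : i != j.

Definition mpoly_to_XY : M -> S :=
  mmap (polyC \o polyC) (fun k => if k == i then 'X%:P else 'X).
Definition poly_to_mpoly : {poly K} -> M := horner_eval 'X_i \o map_poly (@mpolyC 2 K).
Definition XY_to_mpoly : S -> M := horner_eval 'X_j \o map_poly poly_to_mpoly.
HB.instance Definition _ := GRing.RMorphism.on mpoly_to_XY.
HB.instance Definition _ := GRing.RMorphism.on poly_to_mpoly.
HB.instance Definition _ := GRing.RMorphism.on XY_to_mpoly.

Lemma mpoly_to_XY_X k : mpoly_to_XY 'X_k = if k == i then 'X%:P else 'X.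
Proof. by rewrite /mpoly_to_XY mmapX mmap1U. Qed.

Lemma mpoly_to_XYC c : mpoly_to_XY c%:MP = c%:P%:P.
Proof. by rewrite /mpoly_to_XY mmapC. Qed.

Lemma poly_to_mpolyC c : poly_to_mpoly c%:P = c%:MP.
Proof. by rewrite /poly_to_mpoly /= map_polyC /= /horner_eval hornerC. Qed.

Lemma poly_to_mpolyX : poly_to_mpoly 'X = 'X_i.
Proof. by rewrite /poly_to_mpoly /= map_polyX /horner_eval hornerX. Qed.

Lemma XY_to_mpolyC a : XY_to_mpoly a%:P = poly_to_mpoly a.
Proof. by rewrite /XY_to_mpoly /= map_polyC /horner_eval hornerC. Qed.

Lemma XY_to_mpolyX : XY_to_mpoly 'X = 'X_j.
Proof. by rewrite /XY_to_mpoly /= map_polyX /horner_eval hornerX. Qed.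

Lemma XY_to_mpolyK : cancel XY_to_mpoly mpoly_to_XY.
Proof.
have poly_to_mpolyK a : mpoly_to_XY (poly_to_mpoly a) = a%:P.
  elim/poly_ind: a => [|a c IHa]; first by rewrite !rmorph0.
  rewrite rmorphD rmorphM /= poly_to_mpolyX poly_to_mpolyC rmorphD rmorphM /= IHa.
  by rewrite mpoly_to_XY_X eqxx mpoly_to_XYC rmorphD rmorphM.
elim/poly_ind => [|p a IHp]; first by rewrite !rmorph0.
rewrite rmorphD rmorphM /= XY_to_mpolyX XY_to_mpolyC rmorphD rmorphM /= IHp.
by rewrite poly_to_mpolyK mpoly_to_XY_X eq_sym (negbTE ij).
Qed.

Lemma mpoly_to_XYK : cancel mpoly_to_XY XY_to_mpoly.
Proof.
have XK k : XY_to_mpoly (mpoly_to_XY 'X_k) = 'X_k.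
  rewrite mpoly_to_XY_X; case: eqP => [->|/eqP ki].
    by rewrite XY_to_mpolyC poly_to_mpolyX.
  rewrite XY_to_mpolyX; congr 'X_ _; apply/val_inj; move: ki ij; rewrite -!val_eqE /=.
  by case: i j k => [[|[|?]] ?] [[|[|?]] ?] [[|[|?]] ?].
elim/mpolyind => [|c m p _ _ IHp]; first by rewrite !rmorph0.
rewrite rmorphD /= rmorphD /= IHp -mul_mpolyC rmorphM rmorphM /= mpoly_to_XYC.
rewrite XY_to_mpolyC poly_to_mpolyC.
congr (_ * _ + _); rewrite mpolyXE_id !rmorph_prod; apply: eq_bigr => k _.
by rewrite !rmorphXn /= XK.
Qed.

Lemma poly_to_mpoly_eval (E : {rmorphism M -> K}) q :
  (forall c, E c%:MP = c) -> E (poly_to_mpoly q) = q.[E 'X_i].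
Proof.
move=> Ec; rewrite /poly_to_mpoly /= /horner_eval -horner_map /=; congr _.[_].
by apply/polyP => k; rewrite !coef_map /= Ec.
Qed.

End Isomorphism.

Definition mpoly2_eval (x0 y0 : K) : M -> K := eval2 x0 y0 \o mpoly_to_XY ord0.
HB.instance Definition _ x0 y0 := GRing.RMorphism.on (mpoly2_eval x0 y0).

Lemma mpoly2_evalC x0 y0 c : mpoly2_eval x0 y0 c%:MP = c.
Proof. by rewrite /mpoly2_eval /= mpoly_to_XYC eval2C hornerC. Qed.

Lemma mpoly2_evalX0 x0 y0 : mpoly2_eval x0 y0 'X_ord0 = x0.
Proof. by rewrite /mpoly2_eval /= mpoly_to_XY_X eqxx eval2C hornerX. Qed.

Lemma mpoly2_evalX1 x0 y0 : mpoly2_eval x0 y0 'X_ord_max = y0.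
Proof. by rewrite /mpoly2_eval /= mpoly_to_XY_X eval2X. Qed.

Lemma maximal_ideal_mpoly2_eval m :
  is_maximal_ideal m -> exists x0 y0, forall g, m g <-> mpoly2_eval x0 y0 g = 0.
Proof.
have ij : (ord0 : 'I_2) != ord_max by [].
move=> /(is_maximal_ideal_preim (XY_to_mpolyK ij) (mpoly_to_XYK ij)) /maximal_ideal_eval2.
case=> x0 [y0 mE]; exists x0, y0 => g.
by have := mE (mpoly_to_XY ord0 g); rewrite /= (mpoly_to_XYK ij).
Qed.

Lemma mpoly2_eval_decomp x0 y0 g : exists A B,
  g = ('X_ord0 - x0%:MP) * A + ('X_ord_max - y0%:MP) * B + (mpoly2_eval x0 y0 g)%:MP.
Proof.
have ij : (ord0 : 'I_2) != ord_max by [].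
have [A [B eg]] := eval2_decomp x0 y0 (mpoly_to_XY ord0 g).
exists (XY_to_mpoly ord0 ord_max A), (XY_to_mpoly ord0 ord_max B).
have ex : XY_to_mpoly ord0 ord_max ('X - x0%:P)%:P = 'X_ord0 - x0%:MP.
  by rewrite XY_to_mpolyC rmorphB /= poly_to_mpolyX poly_to_mpolyC.
have ey : XY_to_mpoly ord0 ord_max ('X - y0%:P%:P) = 'X_ord_max - y0%:MP.
  by rewrite rmorphB /= XY_to_mpolyX XY_to_mpolyC poly_to_mpolyC.
rewrite -{1}[g](mpoly_to_XYK ij) {1}eg rmorphD /= rmorphD /= !rmorphM /= ex ey.
by rewrite XY_to_mpolyC poly_to_mpolyC.
Qed.

Lemma derivation_mpolyC (D : {linear M -> M}) c : is_derivation D -> D c%:MP = 0.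
Proof. by move=> hD; rewrite -alg_mpolyC linearZ /= (deriv1 hD) scaler0. Qed.

Lemma derivation_mpoly2_eval_kernel (D : {linear M -> M}) x0 y0 : is_derivation D ->
  (forall k, mpoly2_eval x0 y0 (D 'X_k) = 0) ->
  forall g, mpoly2_eval x0 y0 g = 0 -> mpoly2_eval x0 y0 (D g) = 0.
Proof.
move=> hD EDX g Eg.
have Et k c : mpoly2_eval x0 y0 'X_k = c ->
    mpoly2_eval x0 y0 ('X_k - c%:MP) = 0 /\ mpoly2_eval x0 y0 (D ('X_k - c%:MP)) = 0.
  move=> EX; split; first by rewrite rmorphB /= EX mpoly2_evalC subrr.
  by rewrite raddfB /= (derivation_mpolyC _ hD) subr0 EDX.
have [t0E t0D] := Et ord0 x0 (mpoly2_evalX0 x0 y0).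
have [t1E t1D] := Et ord_max y0 (mpoly2_evalX1 x0 y0).
have [A [B eg]] := mpoly2_eval_decomp x0 y0 g; rewrite Eg mpolyC0 addr0 in eg.
rewrite eg raddfD /= !hD rmorphD /= !rmorphD /= !rmorphM /= t0E t0D t1E t1D.
by rewrite !mulr0 !mul0r !addr0.
Qed.

Lemma vanishing_ideal_mpoly2_principal (D : {linear M -> M}) (E : {rmorphism M -> K}) i j :
  [pchar K] =i pred0 -> is_derivation D -> (forall c, E c%:MP = c) -> i != j ->
  E (D 'X_i) != 0 -> exists f, forall g, vanishing_ideal D E g <-> principal_ideal f g.
Proof.
move=> hchar hD Ec ij EDX.
have VK0 a : vanishing_ideal D E (XY_to_mpoly i j a%:P) -> a = 0.
  rewrite XY_to_mpolyC => Va; apply: NNPP => /eqP a0.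
  have [N [q qc ea]] := multiplicity_XsubC a (E 'X_i); rewrite a0 /= in qc.
  move: Va; rewrite ea rmorphM rmorphXn rmorphB /= poly_to_mpolyX poly_to_mpolyC.
  apply: (vanishing_ideal_power hchar hD).
  - by rewrite rmorphB /= Ec subrr.
  - by rewrite raddfB /= (derivation_mpolyC _ hD) subr0.
  - by rewrite poly_to_mpoly_eval.
have Vprime := is_prime_ideal_preim (XY_to_mpoly i j) (vanishing_ideal_prime hchar hD E).
have [pi Vpi] := prime_ideal_principal Vprime VK0.
exists (XY_to_mpoly i j pi).
exact: (principal_ideal_preim (I := vanishing_ideal D E) (mpoly_to_XYK ij) (XY_to_mpolyK ij)).
Qed.

Lemma lrmorphism_eval_invariant (rho : {lrmorphism M -> M}) (E : {rmorphism M -> K}) m :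
  (forall c, E c%:MP = c) -> (forall g, m g <-> E g = 0) ->
  (forall g, image_set rho m g <-> m g) -> forall g, E (rho g) = E g.
Proof.
move=> Ec mE rhom g; have /mE : m (rho (g - (E g)%:MP)).
  by apply/rhom; exists (g - (E g)%:MP); split=> //; apply/mE; rewrite rmorphB /= Ec subrr.
rewrite rmorphB /= -alg_mpolyC rmorph_alg alg_mpolyC rmorphB /= Ec.
by move/eqP; rewrite subr_eq0 => /eqP.
Qed.

End BivariateMpoly.

Theorem lemma2p1 (K : closedFieldType) (hchar : [pchar K] =i pred0)
  (D : {linear {mpoly K[2]} -> {mpoly K[2]}})
  (hD : is_derivation D)
  (rho : {lrmorphism {mpoly K[2]} -> {mpoly K[2]}})
  (hrho_bij : bijective rho)
  (hcomm : forall f, rho (D f) = D (rho f))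
  (m : {mpoly K[2]} -> Prop)
  (hm : is_maximal_ideal m)
  (hrhom : forall g, image_set rho m g <-> m g)
  (hDm : ~ (forall g, m g -> m (D g))) :
  exists f : {mpoly K[2]},
    (forall g, principal_ideal f g -> m g) /\
    (forall g, principal_ideal f g -> principal_ideal f (D g)) /\
    (forall g, image_set rho (principal_ideal f) g <-> principal_ideal f g) /\
    (forall g, principal_ideal f (rho g - g)).
Proof.
have [rho' _ rho'K] := hrho_bij.
have [x0 [y0 mE]] := maximal_ideal_mpoly2_eval hm.
have EC := mpoly2_evalC x0 y0.
have Erho := lrmorphism_eval_invariant EC mE hrhom.
have [i EDXi] : exists i, mpoly2_eval x0 y0 (D 'X_i) != 0.
  apply/existsP; apply: contraT => /existsPn EDX0; case: hDm => g /mE Eg; apply/mE.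
  by apply: derivation_mpoly2_eval_kernel => // k; apply/eqP/negPn/EDX0.
have [f Vf] := vanishing_ideal_mpoly2_principal hchar hD EC (neq_lift i ord0) EDXi.
exists f; split; [|split; [|split]] => g.
- by move/Vf/vanishing_ideal_kerE/mE.
- by move/Vf/vanishing_ideal_deriv/Vf.
- split=> [[h [/Vf Vh <-]]|/Vf Vg].
    by apply/Vf; exact: (proj2 (vanishing_ideal_rho hcomm Erho h) Vh).
  exists (rho' g); split; last exact: rho'K.
  apply/Vf; apply: (proj1 (vanishing_ideal_rho hcomm Erho (rho' g))).
  by move: Vg; rewrite -{1}(rho'K g).
- by apply/Vf; exact: (vanishing_ideal_subr hcomm Erho g).
Qed.
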